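(* Consider $K$-class classification with the uniform off-diagonal noise model described in the context. Then for every classifier $h$ and every $g:\{1,\dots,K\}^2\to\mathrm{dom}(f^* )$, $$\widetilde d_f(h,g)=\Big(1-\sum_{j=1}^K e_j\Big)\,d_f(h,g)+\sum_{j=1}^K e_j\,\Delta^j_f(h,g).$$
   Context: $(X,Y)$ is a random pair with $X\in\mathcal X$ and $Y\in\{1,\dots,K\}$. A noisy label $\tilde Y\in\{1,\dots,K\}$ is generated from $Y$, conditionally independently of $X$ given $Y$, via the transition matrix $T_{i,j}={\mathbb P}(\tilde Y=j\mid Y=i)$. Uniform off-diagonal model: there are $e_1,\dots,e_K\ge0$ with $\sum_j e_j<1$ such that $T_{i,j}=e_j$ for all $i\ne j$ and $T_{i,i}=1-\sum_{j\ne i}e_j$. A classifier is a measurable $h:\mathcal X\to\{1,\dots,K\}$. $P$ is the joint law of $(h(X),Y)$, $Q$ the product of its marginals ${\mathbb P}(h(X)=y){\mathbb P}(Y=y')$, and $\tilde P,\tilde Q$ the same with $\tilde Y$. $f$ is convex with $f(1)=0$, $f^*(u)=\sup_v\{uv-f(v)\}$. $d_f(h,g)=\mathbb E_{Z\sim P}[g(Z)]-\mathbb E_{Z\sim Q}[f^*(g(Z))]$, $\widetilde d_f(h,g)=\mathbb E_{Z\sim \tilde P}[g(Z)]-\mathbb E_{Z\sim \tilde Q}[f^*(g(Z))]$, and for a class $j$, $\Delta^j_f(h,g)=\mathbb E_X[g(h(X),j)]-\mathbb E_X[f^*(g(h(X),j))]$. *)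

From HB Require Import structures.
From mathcomp Require Import all_boot all_order all_algebra.
From mathcomp Require Import all_classical all_reals all_analysis.
Set Implicit Arguments. Unset Strict Implicit. Unset Printing Implicit Defensive.
Import Order.TTheory GRing.Theory Num.Theory.
Local Open Scope classical_set_scope.
Local Open Scope ring_scope.

Section Defs.
Variable R : realType.

Definition convex_fun (f : R -> R) : Prop :=
  forall x y t : R, 0 <= t -> t <= 1 ->
    f (t * x + (1 - t) * y) <= t * f x + (1 - t) * f y.

Definition fconj (f : R -> R) (u : R) : \bar R :=
  ereal_sup [set ((u * v - f v)%:E) | v in setT].

Definition in_dom_fconj (f : R -> R) (u : R) : Prop :=
  fconj f u \is a fin_num.

Definition fconjR (f : R -> R) (u : R) : R := fine (fconj f u).

Variables (d : measure_display) (Omega : measurableType d) (P : probability Omega R).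

Definition pr (A : set Omega) : R := fine (P A).

Variable K : nat.

Definition Tunif (e : 'I_K -> R) (i j : 'I_K) : R :=
  if i == j then 1 - \sum_(k < K | k != i) e k else e j.

(* Z = (a(omega), b(omega)) with a, b : Omega -> 'I_K *)
(* E_{Z ~ joint law}[g Z] - E_{Z ~ product of marginals}[conj(g Z)] *)
Definition dvar (f : R -> R) (a b : Omega -> 'I_K) (g : 'I_K -> 'I_K -> R) : R :=
  \sum_(y < K) \sum_(y' < K)
      pr ([set w | a w = y] `&` [set w | b w = y']) * g y y'
  - \sum_(y < K) \sum_(y' < K)
      pr [set w | a w = y] * pr [set w | b w = y'] * fconjR f (g y y').

Definition Delta (f : R -> R) (a : Omega -> 'I_K) (g : 'I_K -> 'I_K -> R) (j : 'I_K) : R :=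
  \sum_(y < K) pr [set w | a w = y] * g y j
  - \sum_(y < K) pr [set w | a w = y] * fconjR f (g y j).

End Defs.

From HB Require Import structures.
From mathcomp Require Import all_boot all_order all_algebra.
From mathcomp Require Import all_classical all_reals all_analysis.
From mathcomp Require Import lra ring.
Set Implicit Arguments. Unset Strict Implicit. Unset Printing Implicit Defensive.
Import Order.TTheory GRing.Theory Num.Theory.
Local Open Scope classical_set_scope.
Local Open Scope ring_scope.

(** The transition matrix splits as [T = (1 - sum_k e_k) I + 1 e^T]: a noisy
    label keeps the clean one with weight [1 - sum_k e_k] and is otherwise drawn
    from [e] independently of [X].  Hence both the joint law of [(h X, Yt)] and
    the law of [Yt] are the corresponding mixtures, and [d_f] is affine in these
    two laws once the law of [h X] is fixed. *)

Lemma pr_partition (R : realType) (d : measure_display) (Omega : measurableType d)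
    (P : probability Omega R) (n : nat) (Z : Omega -> 'I_n) (B : set Omega) :
  measurable B -> (forall i, measurable (Z @^-1` [set i])) ->
  pr P B = \sum_(i < n) pr P (B `&` Z @^-1` [set i]).
Proof.
move=> mB mZ; have mBZ i : measurable (B `&` Z @^-1` [set i]) by exact: measurableI.
have partB : B = \big[setU/set0]_(i < n) (B `&` Z @^-1` [set i]).
  apply/seteqP; split=> [w Bw|w]; first by rewrite (bigD1 (Z w)) //=; left.
  by elim/big_ind: _ => // [U V BU BV [/BU|/BV]|i _ []].
rewrite /pr {1}partB measure_bigsetU_ord //; last by move=> i j _ _ [w [[_ <-] [_ <-]]].
by rewrite -sum_fine // => i _; exact: fin_num_measure.
Qed.

Lemma Tunif_decomp (R : realType) (K : nat) (e : 'I_K -> R) (i j : 'I_K) :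
  Tunif e i j = e j + (i == j)%:R * (1 - \sum_(k < K) e k).
Proof.
rewrite /Tunif; case: eqP => [<-|_]; last by rewrite mul0r addr0.
by rewrite [in RHS](bigD1 i) //=; lra.
Qed.

Section NoisyLabel.
Variables (R : realType) (d : measure_display) (Omega : measurableType d).
Variables (P : probability Omega R) (dX : measure_display) (Xsp : measurableType dX).
Variables (K : nat) (X : Omega -> Xsp) (Y Yt : Omega -> 'I_K) (e : 'I_K -> R).
Hypothesis mX : measurable_fun setT X.
Hypothesis mY : forall i, measurable (Y @^-1` [set i]).
Hypothesis mYt : forall i, measurable (Yt @^-1` [set i]).
Hypothesis noise : forall (A : set Xsp) (i j : 'I_K), measurable A ->
  P (X @^-1` A `&` Y @^-1` [set i] `&` Yt @^-1` [set j])
  = (P (X @^-1` A `&` Y @^-1` [set i]) * (Tunif e i j)%:E)%E.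

Lemma pr_noisy_label_joint (A : set Xsp) (j : 'I_K) : measurable A ->
  pr P (X @^-1` A `&` Yt @^-1` [set j])
  = e j * pr P (X @^-1` A) + (1 - \sum_(k < K) e k) * pr P (X @^-1` A `&` Y @^-1` [set j]).
Proof.
move=> mA; set c := 1 - \sum_(k < K) e k.
have mXA : measurable (X @^-1` A) by rewrite -[X @^-1` A]setTI; exact: mX.
have mXAYt : measurable (X @^-1` A `&` Yt @^-1` [set j]) by exact: measurableI.
rewrite (pr_partition P mXAYt mY).
under eq_bigr => i _.
  rewrite setIAC /pr noise // fineM //; last exact/fin_num_measure/measurableI.
  rewrite Tunif_decomp -/c mulrDr; over.
rewrite big_split /= -mulr_suml mulrC -(pr_partition P mXA mY); congr (_ + _).
rewrite (bigD1 j) //= eqxx mul1r big1 ?addr0 1?mulrC // => i /negbTE ->.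
by rewrite mul0r mulr0.
Qed.

Lemma pr_noisy_label (j : 'I_K) :
  pr P (Yt @^-1` [set j]) = e j + (1 - \sum_(k < K) e k) * pr P (Y @^-1` [set j]).
Proof.
have := pr_noisy_label_joint j measurableT.
by rewrite preimage_setT !setTI /pr probability_setT mulr1.
Qed.

End NoisyLabel.

Section DvarMixture.
Variables (R : realType) (d : measure_display) (Omega : measurableType d).
Variables (P : probability Omega R) (K : nat) (f : R -> R) (g : 'I_K -> 'I_K -> R).
Variables (a b bt : Omega -> 'I_K) (e : 'I_K -> R) (c : R).
Hypothesis joint_mixture : forall y y',
  pr P ([set w | a w = y] `&` [set w | bt w = y'])
  = e y' * pr P [set w | a w = y] + c * pr P ([set w | a w = y] `&` [set w | b w = y']).
Hypothesis marginal_mixture : forall y',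
  pr P [set w | bt w = y'] = e y' + c * pr P [set w | b w = y'].

Lemma dvar_mixture :
  dvar P f a bt g = c * dvar P f a b g + \sum_(j < K) e j * Delta P f a g j.
Proof.
rewrite /dvar /Delta.
under eq_bigr => y _ do under eq_bigr => y' _ do rewrite joint_mixture.
under [X in _ - X = _]eq_bigr => y _ do under eq_bigr => y' _ do rewrite marginal_mixture.
set p := fun y => pr P [set w | a w = y].
set phi := fun y y' => fconjR f (g y y').
have -> : \sum_(j < K) e j * (\sum_y p y * g y j - \sum_y p y * phi y j)
    = \sum_y \sum_j (e j * (p y * g y j) - e j * (p y * phi y j)).
  by rewrite exchange_big; apply: eq_bigr => j _; rewrite mulrBr !mulr_sumr -sumrB.
rewrite mulrBr !mulr_sumr.
under [X in _ = X - _ + _]eq_bigr => y _ do rewrite mulr_sumr.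
under [X in _ = _ - X + _]eq_bigr => y _ do rewrite mulr_sumr.
rewrite -!sumrB -big_split; apply: eq_bigr => y _.
rewrite -!sumrB -big_split; apply: eq_bigr => y' _.
by rewrite /p /phi /=; ring.
Qed.

End DvarMixture.

Theorem theorem4 (R : realType) (d : measure_display) (Omega : measurableType d)
  (P : probability Omega R) (dX : measure_display) (Xsp : measurableType dX)
  (K : nat) (X : Omega -> Xsp) (Y Yt : Omega -> 'I_K) (e : 'I_K -> R)
  (f : R -> R) (h : Xsp -> 'I_K) (g : 'I_K -> 'I_K -> R) :
  measurable_fun setT X ->
  (forall i : 'I_K, measurable (Y @^-1` [set i])) ->
  (forall i : 'I_K, measurable (Yt @^-1` [set i])) ->
  (forall j, 0 <= e j) -> \sum_(j < K) e j < 1 ->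
  (* noisy label: conditionally independent of X given Y, with transition T *)
  (forall (A : set Xsp) (i j : 'I_K), measurable A ->
     P (X @^-1` A `&` Y @^-1` [set i] `&` Yt @^-1` [set j])
     = (P (X @^-1` A `&` Y @^-1` [set i]) * (Tunif e i j)%:E)%E) ->
  convex_fun f -> f 1 = 0 ->
  (* h is a measurable classifier *)
  (forall y : 'I_K, measurable (h @^-1` [set y])) ->
  (* g takes values in the domain of the conjugate of f *)
  (forall y y' : 'I_K, in_dom_fconj f (g y y')) ->
  dvar P f (h \o X) Yt g
  = (1 - \sum_(j < K) e j) * dvar P f (h \o X) Y g
    + \sum_(j < K) e j * Delta P f (h \o X) g j.
Proof.
move=> mX mY mYt _ _ noise _ _ mh _.
apply: dvar_mixture => [y y'|y'].
- exact: (pr_noisy_label_joint mX mY mYt noise y' (mh y)).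
- exact: (pr_noisy_label mX mY mYt noise y').
Qed.
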